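(* For fixed positive integers $x$ and $y$, the expected number of isolated vertices in the task-dependency graph generated by the $(x,y)$ edge-addition process on $n$ vertices is $o(1)$ as $n\to\infty$.
   Context: A task-dependency graph is a finite directed acyclic graph (no loops, no multiple edges). A vertex is initial if it has in-degree $0$ and terminal if it has out-degree $0$ (an isolated vertex is both). An $(x,y)$ task-dependency graph has exactly $x$ initial and exactly $y$ terminal vertices. The $(x,y)$ edge-addition process on $n$ vertices: start with the empty graph on $\{1,\dots,n\}$ and repeatedly add, uniformly at random, an edge $(a,b)$ with $a<b$ not yet present; if an addition would cause fewer than $x$ initial vertices or fewer than $y$ terminal vertices, it is cancelled. The process halts if the graph after some edge addition is an $(x,y)$ task-dependency graph, or if no more edges can be added; the result is the final graph. *)

From mathcomp Require Import all_boot all_order all_algebra.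
Set Implicit Arguments. Unset Strict Implicit. Unset Printing Implicit Defensive.
Import Order.TTheory GRing.Theory Num.Theory.

(* A graph on the vertex set 'I_n (= {0,...,n-1}, standing for {1,...,n}) is
   its set of directed edges (a,b); the process only ever creates edges a < b. *)
Definition initialv (n : nat) (E : {set 'I_n * 'I_n}) : {set 'I_n} :=
  [set v : 'I_n | [forall u : 'I_n, (u, v) \notin E]].
Definition terminalv (n : nat) (E : {set 'I_n * 'I_n}) : {set 'I_n} :=
  [set v : 'I_n | [forall w : 'I_n, (v, w) \notin E]].
Definition isolatedv (n : nat) (E : {set 'I_n * 'I_n}) : {set 'I_n} :=
  initialv E :&: terminalv E.

Definition is_tdg (n x y : nat) (E : {set 'I_n * 'I_n}) : bool :=
  (#|initialv E| == x) && (#|terminalv E| == y).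

(* e = (a,b), a < b, not present, and adding it is not cancelled *)
Definition addable (n x y : nat) (E : {set 'I_n * 'I_n}) (e : 'I_n * 'I_n) : bool :=
  [&& (e.1 < e.2)%N, e \notin E, (x <= #|initialv (e |: E)|)%N
    & (y <= #|terminalv (e |: E)|)%N].

(* final_prob n x y k E F = probability that the (x,y) edge-addition process,
   currently at graph E, ends with final graph F (k = fuel; each step adds an
   edge, so k = n*n is never exhausted). The next effective addition is uniform
   among the non-cancelled candidate edges (cancelled draws change nothing). *)
Fixpoint final_prob (n x y k : nat) (E F : {set 'I_n * 'I_n}) {struct k} : rat :=
  match k with
  | 0 => (E == F)%:R
  | k'.+1 =>
      let A := [set e | addable x y E e] in
      if A == set0 then (E == F)%:R
      else \sum_(e in A) (#|A|%:R)^-1 *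
             (if is_tdg x y (e |: E) then ((e |: E) == F)%:R
              else final_prob x y k' (e |: E) F)
  end%R.

Definition expected_isolated (n x y : nat) : rat :=
  (\sum_(F : {set 'I_n * 'I_n}) final_prob x y (n * n) set0 F * (#|isolatedv F|)%:R)%R.

From mathcomp Require Import all_boot all_order all_algebra.
From mathcomp Require Import zify ring lra.
Import Order.TTheory GRing.Theory Num.Theory.

(* Let q = (x + y + 2)^2 and b = q / (n - 1).  Call the first x + 2 and the
   last y + 2 vertices the two windows, and let m_l(E) (resp. m_r(E)) count the
   vertices of the first (last) window that are no longer initial (terminal)
   in E; when the process halts with x initial or y terminal vertices, m_l >= 2
   or m_r >= 2.  Put psi(E) = b^(2 - m_l(E)) + b^(2 - m_r(E)).  As long as more
   than x initial and more than y terminal vertices remain, every absent forward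
   edge can be added, so among the |A| candidate edges at least n - 1 hit a
   given isolated vertex v, while m_l (or m_r) grows only if the new edge lies
   inside its window, which holds for at most q of them.  Hence [v isolated] * psi
   is a supermartingale, and the expected number of isolated vertices at the
   end is at most n psi(empty) = 2 n b^2 = O(1/n). *)

Set Implicit Arguments.
Unset Strict Implicit.
Unset Printing Implicit Defensive.

Lemma setD1_subset_leq_card (T : finType) (A B : {set T}) a :
  A :\ a \subset B -> (#|A| <= #|B|.+1)%N.
Proof. by move=> /subset_leq_card; rewrite (cardsD1 a A); case: (a \in A) => /=; lia. Qed.

Lemma card_setD_setD1_subset (T : finType) (W S S' : {set T}) a :
  S :\ a \subset S' -> (#|W :\: S'| <= #|W :\: S| + (a \in W))%N.
Proof.
move=> sub; have subU : W :\: S' \subset (W :\: S) :|: (W :&: [set a]).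
  apply/subsetP => u; rewrite !inE => /andP[uS' ->]; rewrite andbT orbC.
  case: eqP => //= /eqP ua; apply: contra uS' => uS.
  by apply: (subsetP sub); rewrite !inE ua.
apply: leq_trans (subset_leq_card subU) (leq_trans (leq_card_setU _ _) _).
rewrite leq_add2l; case: (boolP (a \in W)) => aW.
  by rewrite (leq_trans (subset_leq_card (subsetIr W [set a]))) ?cards1.
rewrite (_ : W :&: [set a] = set0) ?cards0 //; apply/setP => u; rewrite !inE.
by case: (eqVneq u a) => [->|]; rewrite ?(negbTE aW) ?andbF.
Qed.

Lemma leq_card_sub_setD (T : finType) (W S : {set T}) : (#|W| - #|S| <= #|W :\: S|)%N.
Proof. by rewrite cardsD leq_sub2l // subset_leq_card ?subsetIr. Qed.

Section Vertices.
Variable n : nat.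
Implicit Types (E A : {set 'I_n * 'I_n}) (e : 'I_n * 'I_n) (u v : 'I_n).

Lemma initialv_setU1_subset e E : initialv (e |: E) \subset initialv E.
Proof.
apply/subsetP => v; rewrite !inE => /forallP inv; apply/forallP => u.
by have := inv u; rewrite !inE negb_or => /andP[].
Qed.

Lemma terminalv_setU1_subset e E : terminalv (e |: E) \subset terminalv E.
Proof.
apply/subsetP => v; rewrite !inE => /forallP inv; apply/forallP => u.
by have := inv u; rewrite !inE negb_or => /andP[].
Qed.

Lemma isolatedv_setU1_subset e E : isolatedv (e |: E) \subset isolatedv E.
Proof. exact: setISS (initialv_setU1_subset e E) (terminalv_setU1_subset e E). Qed.

Lemma initialv_setD1_subset e E : initialv E :\ e.2 \subset initialv (e |: E).
Proof.
apply/subsetP => v; rewrite !inE => /andP[ve /forallP inv]; apply/forallP => u.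
by rewrite !inE negb_or inv andbT; apply: contra ve => /eqP<-.
Qed.

Lemma terminalv_setD1_subset e E : terminalv E :\ e.1 \subset terminalv (e |: E).
Proof.
apply/subsetP => v; rewrite !inE => /andP[ve /forallP inv]; apply/forallP => u.
by rewrite !inE negb_or inv andbT; apply: contra ve => /eqP<-.
Qed.

Lemma initialv_set0 : initialv (set0 : {set 'I_n * 'I_n}) = setT.
Proof. by apply/setP => v; rewrite !inE; apply/forallP => u; rewrite inE. Qed.

Lemma terminalv_set0 : terminalv (set0 : {set 'I_n * 'I_n}) = setT.
Proof. by apply/setP => v; rewrite !inE; apply/forallP => u; rewrite inE. Qed.

Definition incident v : {set 'I_n * 'I_n} := [set e | (e.1 == v) || (e.2 == v)].

Lemma notin_isolatedv_setU1 e E v : e \in incident v -> v \notin isolatedv (e |: E).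
Proof.
case: e => a b; rewrite !inE negb_and => /orP[] /eqP <-; apply/orP.
  by right; apply/forallPn; exists b; rewrite !inE eqxx.
by left; apply/forallPn; exists a; rewrite !inE eqxx.
Qed.

Lemma incident_isolatedv_notin e E v :
  v \in isolatedv E -> e \in incident v -> e \notin E.
Proof.
case: e => a b; rewrite !inE => /andP[/forallP v_init /forallP v_term].
by case/orP => /eqP /= ->.
Qed.

Definition forward E := forall e, e \in E -> (e.1 < e.2)%N.

Lemma card_incident A v :
  (forall e, (e.1 < e.2)%N -> e \in incident v -> e \in A) ->
  (n.-1 <= #|A :&: incident v|)%N.
Proof.
move=> incA; pose f u := if (u < v)%N then (u, v) else (v, u).
have f_inj : {in [set~ v] &, injective f}.
  by move=> u w _ _; rewrite /f; do 2 case: ifP => _; case=> // -> //.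
have -> : n.-1 = #|[set~ v]| by rewrite cardsC1 card_ord.
rewrite -(card_in_imset f_inj) subset_leq_card //.
apply/subsetP => e /imsetP[u]; rewrite in_setC1 => uv ->.
have fuv : f u \in incident v by rewrite /f inE; case: ifP; rewrite eqxx ?orbT.
rewrite in_setI fuv andbT incA //; move: uv; rewrite -val_eqE /f; case: ifP => //=.
by move=> /negbT; rewrite -leqNgt => ? ?; lia.
Qed.

Definition first_vertices (m : nat) : {set 'I_n} := [set u : 'I_n | (u < m)%N].
Definition last_vertices (m : nat) : {set 'I_n} := [set u : 'I_n | (n <= u + m)%N].

Lemma card_first_vertices m : (m <= n)%N -> #|first_vertices m| = m.
Proof.
move=> le_mn; have -> : first_vertices m = [set widen_ord le_mn i | i in 'I_m].
  apply/setP => u; rewrite inE.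
  apply/idP/imsetP => [lt_um | [i _ ->]]; last exact: (ltn_ord i).
  by exists (Ordinal lt_um) => //; apply: val_inj.
by rewrite card_imset ?card_ord // => i j [] /ord_inj.
Qed.

Lemma card_last_vertices m : (m <= n)%N -> #|last_vertices m| = m.
Proof.
move=> le_mn; have -> : last_vertices m = (@rev_ord n) @: first_vertices m.
  apply/setP => u; rewrite (can2_imset_pre _ rev_ordK rev_ordK) !inE /=.
  by apply/idP/idP; have := ltn_ord u; lia.
by rewrite card_imset ?card_first_vertices //; apply: rev_ord_inj.
Qed.

Lemma card_forward_first_vertices A m : forward A ->
  (#|A :&: [set e | e.2 \in first_vertices m]| <= #|first_vertices m| ^ 2)%N.
Proof.
move=> fwA; rewrite -mulnn -cardsX subset_leq_card //; apply/subsetP => e.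
by rewrite !inE => /andP[/fwA]; case: e => a b /= ab bm; rewrite bm (ltn_trans ab bm).
Qed.

Lemma card_forward_last_vertices A m : forward A ->
  (#|A :&: [set e | e.1 \in last_vertices m]| <= #|last_vertices m| ^ 2)%N.
Proof.
move=> fwA; rewrite -mulnn -cardsX subset_leq_card //; apply/subsetP => e.
by rewrite !inE => /andP[/fwA]; case: e => a b /= ab am; rewrite am /=; lia.
Qed.

Lemma card_forward_lt E : (0 < n)%N -> forward E -> (#|E| < n * n)%N.
Proof.
move=> n_gt0 fwE.
have -> : n * n = #|[set: 'I_n * 'I_n]| by rewrite cardsT card_prod card_ord.
apply/proper_card/properP; split; first exact: subsetT.
exists (Ordinal n_gt0, Ordinal n_gt0); rewrite ?inE //.
by apply/negP => /fwE; rewrite ltnn.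
Qed.

End Vertices.

Local Open Scope ring_scope.

Lemma sum_eq_indicator (R : pzSemiRingType) (T : finType) (t : T) (w : T -> R) :
  \sum_(s : T) (t == s)%:R * w s = w t.
Proof.
rewrite -(big_pred1_eq (@GRing.add R) t w) big_mkcond; apply: eq_bigr => s _.
by rewrite eq_sym; case: eqP; rewrite ?mul1r ?mul0r.
Qed.

Lemma sum_indicator_card (R : pzSemiRingType) (T : finType) (A C : {set T}) :
  \sum_(e in A) (e \in C)%:R = #|A :&: C|%:R :> R.
Proof.
rewrite -sum1_card natr_sum [RHS]big_mkcond [LHS]big_mkcond /=.
by apply: eq_bigr => e _; rewrite inE; case: (e \in A); case: (e \in C).
Qed.

Lemma sum_killed_potential_le (R : realFieldType) (T : finType) (A C K : {set T})
    (mf : T -> nat) (m q d : nat) (b : R) :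
  0 <= b <= 1 -> b * d%:R = q%:R ->
  (#|A :&: C| <= q)%N -> (d <= #|A :&: K|)%N ->
  (forall e, e \in A -> mf e <= m + (e \in C))%N ->
  \sum_(e in A) (e \notin K)%:R * b ^+ (2 - mf e) <= #|A|%:R * b ^+ (2 - m).
Proof.
move=> /andP[b_ge0 b_le1] bd AC_le AK_ge mf_le.
have term_le1 e : (e \notin K)%:R * b ^+ (2 - mf e) <= 1.
  by rewrite mulr_ile1 ?exprn_ge0 ?exprn_ile1 ?lern1 ?leq_b1.
have [m_ge2 | m_lt2] := leqP 2 m.
  rewrite (_ : (2 - m)%N = 0%N) ?expr0 ?mulr1; last by lia.
  by rewrite -sum1_card natr_sum ler_sum.
(* With c = b^(1-m), a gain c on C is paid for by the loss b c on K, since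
   |A :&: C| <= q = b d <= b |A :&: K|. *)
set c := b ^+ (1 - m); have c_ge0 : 0 <= c by rewrite exprn_ge0.
have bc : b ^+ (2 - m) = b * c by rewrite /c -exprS; congr (_ ^+ _); lia.
have term_le e : e \in A ->
    (e \notin K)%:R * b ^+ (2 - mf e)
      <= b * c + (e \in C)%:R * c - (e \in K)%:R * (b * c).
  move=> eA; case: (e \in K) => /=.
    by rewrite mul0r mul1r addrAC subrr add0r mulr_ge0 ?ler0n.
  rewrite mul1r mul0r subr0; have := mf_le e eA; case: (e \in C) => /= mf_le'.
    rewrite mul1r (le_trans (ler_wiXn2l b_ge0 b_le1 _ : _ <= c)) ?lerDr ?mulr_ge0 //.
    lia.
  by rewrite mul0r addr0 -bc ler_wiXn2l //; lia.
apply: le_trans (ler_sum _ term_le) _.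
rewrite sumrB big_split /= -!big_distrl /= !sum_indicator_card sumr_const bc.
rewrite -mulr_natr mulrC.
suff : #|A :&: C|%:R * c <= #|A :&: K|%:R * (b * c) by lra.
apply: le_trans (_ : q%:R * c <= _); first by rewrite ler_wpM2r ?ler_nat.
by rewrite -bd mulrCA mulrA ler_wpM2r ?mulr_ge0 // ler_wpM2l ?ler_nat.
Qed.

Section Process.
Variables n x y : nat.
Implicit Types (E F : {set 'I_n * 'I_n}) (e : 'I_n * 'I_n).

Definition slack E := (x < #|initialv E|)%N && (y < #|terminalv E|)%N.

Lemma addable_slack E e :
  slack E -> addable x y E e = (e.1 < e.2)%N && (e \notin E).
Proof.
case/andP => x_lt y_lt; rewrite /addable.
have init_ge := setD1_subset_leq_card (initialv_setD1_subset e E).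
have term_ge := setD1_subset_leq_card (terminalv_setD1_subset e E).
have -> : (x <= #|initialv (e |: E)|)%N by lia.
have -> : (y <= #|terminalv (e |: E)|)%N by lia.
by rewrite !andbT.
Qed.

Definition candidates E := [set e | addable x y E e].

Lemma candidates_neq0 E : (0 < x)%N -> slack E -> candidates E != set0.
Proof.
move=> x_gt0 slE; have /card_gt1P[a [b [ai bi ab]]] : (1 < #|initialv E|)%N.
  by case/andP: slE; lia.
have addable_to (u v : 'I_n) : (u < v)%N -> v \in initialv E -> addable x y E (u, v).
  by move=> uv; rewrite inE => /forallP v_init; rewrite addable_slack //= uv v_init.
apply/set0Pn; case: (ltngtP a b) => [lt_ab | lt_ba | /val_inj eq_ab].
- by exists (a, b); rewrite inE addable_to.
- by exists (b, a); rewrite inE addable_to.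
- by rewrite eq_ab eqxx in ab.
Qed.

Definition mean_isolated k E : rat :=
  \sum_F final_prob x y k E F * #|isolatedv F|%:R.

Lemma mean_isolated0 E : mean_isolated 0 E = #|isolatedv E|%:R.
Proof. exact: sum_eq_indicator. Qed.

Lemma mean_isolatedS k E :
  mean_isolated k.+1 E =
  if candidates E == set0 then #|isolatedv E|%:R
  else \sum_(e in candidates E) #|candidates E|%:R^-1 *
     (if is_tdg x y (e |: E) then #|isolatedv (e |: E)|%:R
      else mean_isolated k (e |: E)).
Proof.
rewrite /mean_isolated /candidates /=; case: ifP => _; first exact: sum_eq_indicator.
under eq_bigr do rewrite big_distrl.
rewrite exchange_big; apply: eq_bigr => e _ /=.
under eq_bigr do rewrite -mulrA.
rewrite -big_distrr /=; congr (_ * _).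
by case: ifP => _ //; rewrite sum_eq_indicator.
Qed.

Lemma mean_isolated_le k E : mean_isolated k E <= #|isolatedv E|%:R.
Proof.
elim: k E => [|k IHk] E; first by rewrite mean_isolated0.
rewrite mean_isolatedS; case: ifP => // /negbT A_neq0; set A := candidates E.
apply: le_trans (_ : \sum_(e in A) #|A|%:R^-1 * #|isolatedv E|%:R <= _).
  apply: ler_sum => e _; rewrite ler_wpM2l ?invr_ge0 //.
  have iso_le : #|isolatedv (e |: E)|%:R <= #|isolatedv E|%:R :> rat.
    by rewrite ler_nat subset_leq_card ?isolatedv_setU1_subset.
  by case: ifP => _ //; apply: le_trans (IHk _) iso_le.
rewrite sumr_const -[_ *+ #|A|]mulr_natl mulrA mulfV ?mul1r //.
by rewrite pnatr_eq0 -lt0n card_gt0.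
Qed.

End Process.

Definition window_sq x y := ((x + y).+2 ^ 2)%N.
Definition ratio n x y : rat := (window_sq x y)%:R / n.-1%:R.

Section Potential.
Variables n x y : nat.
Hypothesis window_sq_le : (window_sq x y <= n.-1)%N.
Implicit Types (E : {set 'I_n * 'I_n}) (e : 'I_n * 'I_n) (v : 'I_n).

Definition init_deficit E := #|first_vertices n x.+2 :\: initialv E|.
Definition term_deficit E := #|last_vertices n y.+2 :\: terminalv E|.
Definition potential E : rat :=
  ratio n x y ^+ (2 - init_deficit E) + ratio n x y ^+ (2 - term_deficit E).

Lemma windows_fit : (x.+2 <= n)%N /\ (y.+2 <= n)%N.
Proof. by move: window_sq_le; rewrite /window_sq -mulnn; split; nia. Qed.

Lemma ratio_ge0 : 0 <= ratio n x y.
Proof. by rewrite divr_ge0. Qed.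

Lemma ratio_le1 : ratio n x y <= 1.
Proof.
have [xn _] := windows_fit.
by rewrite ler_pdivrMr ?mul1r ?ler_nat // ltr0n; lia.
Qed.

Lemma ratio_mul : ratio n x y * n.-1%:R = (window_sq x y)%:R.
Proof.
have [xn _] := windows_fit.
by rewrite -mulrA mulVf ?mulr1 // pnatr_eq0; lia.
Qed.

Lemma potential_ge1 E : ~~ slack x y E -> 1 <= potential E.
Proof.
have [xn yn] := windows_fit; have r_ge0 := ratio_ge0.
rewrite /slack negb_and -!leqNgt /potential => /orP[] small.
  have := leq_card_sub_setD (first_vertices n x.+2) (initialv E).
  rewrite card_first_vertices // -/(init_deficit E) => ?.
  by rewrite (_ : (2 - _)%N = 0%N) ?expr0 ?lerDl ?exprn_ge0 //; lia.
have := leq_card_sub_setD (last_vertices n y.+2) (terminalv E).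
rewrite card_last_vertices // -/(term_deficit E) => ?.
by rewrite [X in _ + X](_ : _ = 1) ?lerDr ?exprn_ge0 // (_ : (2 - _)%N = 0%N) //; lia.
Qed.

Lemma potential_window_step (A : {set 'I_n * 'I_n}) E v (W : {set 'I_n})
    (S : {set 'I_n * 'I_n} -> {set 'I_n}) (p : 'I_n * 'I_n -> 'I_n) :
  v \in isolatedv E ->
  (forall e, (e.1 < e.2)%N -> e \notin E -> e \in A) ->
  (forall e, S E :\ p e \subset S (e |: E)) ->
  (#|A :&: [set e | p e \in W]| <= window_sq x y)%N ->
  \sum_(e in A) (v \in isolatedv (e |: E))%:R * ratio n x y ^+ (2 - #|W :\: S (e |: E)|)
    <= #|A|%:R * ratio n x y ^+ (2 - #|W :\: S E|).
Proof.
move=> vE fw_in_A S_step AW_le.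
apply: le_trans (sum_killed_potential_le (K := incident v)
  (mf := fun e => #|W :\: S (e |: E)|) _ ratio_mul AW_le _ _).
- apply: ler_sum => e _; rewrite ler_wpM2r ?exprn_ge0 ?ratio_ge0 // ler_nat.
  case: (boolP (e \in incident v)) => [/notin_isolatedv_setU1 /negbTE -> //|_].
  exact: leq_b1.
- by rewrite ratio_ge0 ratio_le1.
- apply: card_incident => e fw_e ev.
  exact: fw_in_A fw_e (incident_isolatedv_notin vE ev).
- by move=> e _; rewrite inE; apply: card_setD_setD1_subset.
Qed.

Lemma potential_step E v : slack x y E -> v \in isolatedv E ->
  \sum_(e in candidates x y E) (v \in isolatedv (e |: E))%:R * potential (e |: E)
    <= #|candidates x y E|%:R * potential E.
Proof.
move=> slE vE; set A := candidates x y E; have [xn yn] := windows_fit.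
have fwA : forward A by move=> e; rewrite inE => /and4P[].
have fw_in_A e : (e.1 < e.2)%N -> e \notin E -> e \in A.
  by move=> ? ?; rewrite inE addable_slack //; apply/andP.
have sq_le m : (m <= x + y)%N -> (m.+2 ^ 2 <= window_sq x y)%N.
  by move=> ?; rewrite leq_sqr.
rewrite /potential /init_deficit /term_deficit mulrDr.
under eq_bigr do rewrite mulrDr; rewrite big_split /=.
apply: lerD.
- apply: (potential_window_step (S := @initialv n) (p := snd)) => //.
    by move=> e; apply: initialv_setD1_subset.
  rewrite (leq_trans (card_forward_first_vertices _ fwA)) //.
  by rewrite card_first_vertices ?sq_le ?leq_addr.
- apply: (potential_window_step (S := @terminalv n) (p := fst)) => //.
    by move=> e; apply: terminalv_setD1_subset.
  rewrite (leq_trans (card_forward_last_vertices _ fwA)) //.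
  by rewrite card_last_vertices ?sq_le ?leq_addl.
Qed.

Lemma average_potential_le E : slack x y E -> candidates x y E != set0 ->
  \sum_(e in candidates x y E)
     #|candidates x y E|%:R^-1 * (#|isolatedv (e |: E)|%:R * potential (e |: E))
  <= #|isolatedv E|%:R * potential E.
Proof.
move=> slE A_neq0; set A := candidates x y E.
rewrite -big_distrr /=.
under eq_bigr => e _ do
  rewrite -(setIidPr (isolatedv_setU1_subset e E)) -sum_indicator_card big_distrl /=.
rewrite exchange_big /=.
apply: le_trans (_ : #|A|%:R^-1 * \sum_(v in isolatedv E) (#|A|%:R * potential E) <= _).
  by rewrite ler_wpM2l ?invr_ge0 // ler_sum // => v vE; apply: potential_step.
rewrite sumr_const mulrnAr mulrA mulVf ?mul1r ?mulr_natl //.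
by rewrite pnatr_eq0 -lt0n card_gt0.
Qed.

Hypothesis x_gt0 : (0 < x)%N.

(* The fuel k cannot run out: a forward graph has fewer than n * n edges. *)
Lemma mean_isolated_le_potential k E :
  forward E -> slack x y E -> (n * n <= #|E| + k)%N ->
  mean_isolated x y k E <= #|isolatedv E|%:R * potential E.
Proof.
have [xn _] := windows_fit; have n_gt0 : (0 < n)%N by lia.
elim: k E => [|k IHk] E fwE slE fuel.
  by have := card_forward_lt n_gt0 fwE; lia.
have A_neq0 := candidates_neq0 x_gt0 slE.
rewrite mean_isolatedS (negbTE A_neq0); apply: le_trans (average_potential_le slE A_neq0).
apply: ler_sum => e; rewrite inE => /and4P[lt_e e_notin _ _].
rewrite ler_wpM2l ?invr_ge0 //.
have iso_le_pot : ~~ slack x y (e |: E) ->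
    #|isolatedv (e |: E)|%:R <= #|isolatedv (e |: E)|%:R * potential (e |: E).
  by move=> /potential_ge1; apply: ler_peMr.
case: ifP => [tdg | _].
  apply: iso_le_pot; move: tdg.
  by rewrite /is_tdg /slack => /andP[/eqP -> _]; rewrite ltnn.
case: (boolP (slack x y (e |: E))) => [slE' | /iso_le_pot]; last first.
  exact: le_trans (mean_isolated_le x y k _).
apply: IHk => //; last by rewrite cardsU1 e_notin; lia.
by move=> f; rewrite !inE => /orP[/eqP -> | /fwE].
Qed.

End Potential.

Lemma eventually_lt_sq_ratio (q : nat) (eps : rat) : 0 < eps ->
  exists N, forall n, (N <= n)%N -> n%:R * ((q%:R / n.-1%:R) ^+ 2 *+ 2) < eps.
Proof.
move=> eps_gt0; set c := 4 * q%:R ^+ 2 / eps.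
have c_lt : c < (Num.Def.archi_bound c)%:R.
  by apply: archi_boundP; rewrite divr_ge0 ?mulr_ge0 ?exprn_ge0 // ltW.
exists (Num.Def.archi_bound c).+2 => n le_n.
have -> : n = n.-1.+1 by rewrite prednK //; lia.
have d_ge : (Num.Def.archi_bound c)%:R + 1 <= n.-1%:R :> rat.
  by rewrite natr1 ler_nat; lia.
have D_gt0 : 0 < n.-1%:R :> rat by rewrite ltr0n; lia.
set D := n.-1%:R in d_ge D_gt0 *.
have {c_lt} qD : 4 * q%:R ^+ 2 < eps * (D - 1).
  by move: c_lt; rewrite /c ltr_pdivrMr // => c_lt; nra.
rewrite -natr1 -/D expr_div_n mulrnAr -mulr_natr.
rewrite [X in X < _](_ : _ = (D + 1) * q%:R ^+ 2 * 2 / D ^+ 2); last first.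
  by field; rewrite gt_eqF.
rewrite ltr_pdivrMr ?exprn_gt0 //.
have q2_ge0 : 0 <= q%:R ^+ 2 :> rat by rewrite exprn_ge0.
nra.
Qed.

Theorem mainTheorem17 (x y : nat) :
  (0 < x)%N -> (0 < y)%N ->
  forall eps : rat, (0 < eps)%R ->
    exists N : nat, forall n : nat, (N <= n)%N -> (expected_isolated n x y < eps)%R.
Proof.
move=> x_gt0 _ eps eps_gt0.
have [N small] := eventually_lt_sq_ratio (window_sq x y) eps_gt0.
exists (maxn N (window_sq x y).+1) => n; rewrite geq_max => /andP[le_Nn le_wn].
have wn : (window_sq x y <= n.-1)%N by lia.
have [xn yn] := windows_fit wn.
have fw0 : forward (set0 : {set 'I_n * 'I_n}) by move=> e; rewrite inE.
have sl0 : slack x y (set0 : {set 'I_n * 'I_n}).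
  by rewrite /slack initialv_set0 terminalv_set0 cardsT card_ord; apply/andP; split; lia.
change (mean_isolated x y (n * n) (set0 : {set 'I_n * 'I_n}) < eps).
apply: le_lt_trans (mean_isolated_le_potential wn x_gt0 fw0 sl0 _) _.
  by rewrite cards0.
rewrite /isolatedv /potential /init_deficit /term_deficit initialv_set0 terminalv_set0.
by rewrite setIT cardsT card_ord !setDT !cards0 subn0 small.
Qed.
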